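(* Let $G$ and $H$ be finite simple graphs without isolated vertices. Let $g=(A_0,A_1,A_2)$ be a $\gamma_{tR}(G)$-function with $|A_2|$ maximum among all $\gamma_{tR}(G)$-functions, and let $h=(B_0,B_1,B_2)$ be a $\gamma_{tR}(H)$-function with $|B_2|$ maximum among all $\gamma_{tR}(H)$-functions. Then $$\max\{\rho(H)\gamma_{tR}(G),\rho(G)\gamma_{tR}(H)\}\le \gamma_{tR}(G\times H)\le \gamma_{tR}(H)\gamma_{tR}(G)-2|A_2||B_2|.$$
   Context: For a graph $G$ without isolated vertices, a total Roman dominating function is a map $f:V(G)\to\{0,1,2\}$, written $f=(V_0,V_1,V_2)$ with $V_i=\{v: f(v)=i\}$, such that every vertex in $V_0$ has a neighbor in $V_2$ and the subgraph induced by $V_1\cup V_2$ has no isolated vertices. Its weight is $\omega(f)=\sum_v f(v)$. The total Roman domination number $\gamma_{tR}(G)$ is the minimum weight of a total Roman dominating function; a $\gamma_{tR}(G)$-function is one attaining it. A packing of $G$ is a set $D$ of vertices with $N[u]\cap N[v]=\emptyset$ for all distinct $u,v\in D$ (closed neighborhoods); $\rho(G)$ is the maximum size of a packing. The direct product $G\times H$ has vertex set $V(G)\times V(H)$, with $(g,h)(g',h')$ an edge iff $gg'\in E(G)$ and $hh'\in E(H)$. *)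

From mathcomp Require Import all_boot.
Set Implicit Arguments. Unset Strict Implicit. Unset Printing Implicit Defensive.

Definition simple_graph (T : finType) (e : rel T) : Prop :=
  symmetric e /\ irreflexive e.

Definition no_isolated (T : finType) (e : rel T) : Prop :=
  forall v : T, exists u : T, e v u.

Definition direct_prod (T1 T2 : finType) (e1 : rel T1) (e2 : rel T2)
  : rel (T1 * T2) :=
  fun x y => e1 x.1 y.1 && e2 x.2 y.2.

Definition rfun (T : finType) := {ffun T -> 'I_3}.

Definition level (T : finType) (f : rfun T) (i : nat) : {set T} :=
  [set v | nat_of_ord (f v) == i].

Definition weight (T : finType) (f : rfun T) : nat := \sum_(v : T) nat_of_ord (f v).

Definition is_TRDF (T : finType) (e : rel T) (f : rfun T) : bool :=
  [forall v, (nat_of_ord (f v) == 0) ==> [exists u, e v u && (nat_of_ord (f u) == 2)]]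
  && [forall v, (nat_of_ord (f v) != 0) ==> [exists u, e v u && (nat_of_ord (f u) != 0)]].

(* gamma_tR: minimum weight of a TRDF (default 2|V| is never attained as
   a strict bound issue, since the all-2 function is a TRDF when there are
   no isolated vertices). *)
Definition gamma_tR (T : finType) (e : rel T) : nat :=
  \big[minn/(2 * #|T|)%N]_(f : rfun T | is_TRDF e f) weight f.

Definition is_gamma_tR_fun (T : finType) (e : rel T) (f : rfun T) : Prop :=
  is_TRDF e f /\ weight f = gamma_tR e.

Definition cnbhd (T : finType) (e : rel T) (v : T) : {set T} :=
  [set u | (u == v) || e v u].

Definition packing (T : finType) (e : rel T) (D : {set T}) : bool :=
  [forall u in D, forall v in D, (u != v) ==> [disjoint cnbhd e u & cnbhd e v]].

Definition rho (T : finType) (e : rel T) : nat :=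
  \max_(D : {set T} | packing e D) #|D|.

From mathcomp Require Import all_boot zify.

Set Implicit Arguments.
Unset Strict Implicit.
Unset Printing Implicit Defensive.

(** Upper bound: (x, y) |-> min(2, g(x) h(y)) is a total Roman dominating
    function of G x H, and on {0, 1, 2} we have min(2, ab) = ab - 2[a = 2][b = 2],
    so its weight is w(g) w(h) - 2|A_2||B_2|.
    Lower bound: for a total Roman dominating function f of G x H and a vertex d
    of H, x |-> min(2, sum of f(x, y) over y in N[d]) is a total Roman dominating
    function of G, hence has weight at least gamma_tR(G).  For a packing D of H
    the sets N[d], d in D, are disjoint, so these |D| weights sum to at most
    w(f).  The bound with G and H exchanged follows by swapping coordinates. *)

Lemma bigmin_leq_cond (I : finType) (P : pred I) (F : I -> nat) x0 i0 :
  P i0 -> \big[minn/x0]_(i | P i) F i <= F i0.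
Proof.
move=> Pi0; have : i0 \in index_enum I by rewrite mem_index_enum.
elim: (index_enum I) => // i r IHr; rewrite inE big_cons.
case/predU1P=> [<-|/IHr le_r]; first by rewrite Pi0 geq_minl.
by case: ifP => // _; rewrite geq_min le_r orbT.
Qed.

Definition cap2 (n : nat) : 'I_3 := inord (minn 2 n).

Lemma cap2E n : cap2 n = minn 2 n :> nat.
Proof. by rewrite inordK // ltnS geq_minl. Qed.

Lemma cap2_mul_level2 (a b : 'I_3) :
  minn 2 (a * b) + 2 * (a == 2 :> nat) * (b == 2 :> nat) = a * b.
Proof. by case: a => [[|[|[|a]]] //=] ?; case: b => [[|[|[|b]]] //=]. Qed.

Section TotalRomanDomination.

Variables (T : finType) (e : rel T).
Implicit Types (f : rfun T) (D : {set T}).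

Lemma TRDFP f :
  reflect ((forall v, f v = 0 :> nat -> exists2 u, e v u & f u = 2 :> nat) /\
           (forall v, exists2 u, e v u & f u != 0 :> nat))
          (is_TRDF e f).
Proof.
apply: (iffP andP) => [[/forallP f0 /forallP fN] | [f0 fN]]; split.
- move=> v /eqP/(implyP (f0 v))/existsP[u /andP[evu /eqP fu]].
  by exists u.
- move=> v; have [/eqP fv|fv] := eqVneq (f v : nat) 0.
    have /existsP[u /andP[evu /eqP fu]] := implyP (f0 v) fv.
    by exists u; rewrite ?fu.
  have /existsP[u /andP[evu fu]] := implyP (fN v) fv.
  by exists u.
- apply/forallP=> v; apply/implyP=> /eqP/f0[u evu fu].
  by apply/existsP; exists u; rewrite evu fu.
- apply/forallP=> v; apply/implyP=> _; have [u evu fu] := fN v.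
  by apply/existsP; exists u; rewrite evu.
Qed.

Lemma gamma_tR_le_weight f : is_TRDF e f -> gamma_tR e <= weight f.
Proof. exact: bigmin_leq_cond. Qed.

Lemma leq_gamma_tR k :
  no_isolated e -> (forall f, is_TRDF e f -> k <= weight f) -> k <= gamma_tR e.
Proof.
move=> niT le_k.
apply: (big_ind (leq k)) => [|m n km kn|f /le_k //]; last first.
  by rewrite leq_min km kn.
pose two : rfun T := [ffun=> inord 2].
have twoE v : two v = 2 :> nat by rewrite ffunE inordK.
have -> : 2 * #|T| = weight two.
  by rewrite /weight (eq_bigr _ (fun v _ => twoE v)) sum_nat_const mulnC.
apply/le_k/TRDFP; split=> v; first by rewrite twoE.
by have [u evu] := niT v; exists u; rewrite ?twoE.
Qed.

Lemma card_level f i : #|level f i| = \sum_v (f v == i :> nat).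
Proof.
by rewrite -sum1_card big_mkcond; apply: eq_bigr => v _; rewrite inE; case: eqP.
Qed.

Lemma mem_cnbhd_refl v : v \in cnbhd e v.
Proof. by rewrite inE eqxx. Qed.

Lemma mem_cnbhd_adj v u : e v u -> u \in cnbhd e v.
Proof. by rewrite inE => ->; rewrite orbT. Qed.

Lemma packing_cnbhd_eq D u v y :
  packing e D -> u \in D -> v \in D -> y \in cnbhd e u -> y \in cnbhd e v ->
  u = v.
Proof.
move=> /forallP/(_ u)/implyP pkD uD vD yu yv.
move/forallP/(_ v)/implyP/(_ vD)/implyP: (pkD uD).
by case: eqVneq => // _ /(_ isT)/disjointFr/(_ yu); rewrite yv.
Qed.

Lemma packing_sum_cnbhd_le D (F : T -> nat) :
  packing e D -> \sum_(d in D) \sum_(y in cnbhd e d) F y <= \sum_y F y.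
Proof.
move=> pkD; rewrite (exchange_big_dep predT) //=; apply: leq_sum => y _.
case: (pickP [pred d | (d \in D) && (y \in cnbhd e d)]) => [d0 /andP[d0D yd0]|].
  rewrite (bigD1 d0) ?d0D ?yd0 //= big1 ?addn0 // => d /andP[/andP[dD yd]].
  by rewrite (packing_cnbhd_eq pkD dD d0D yd yd0) eqxx.
by move=> noD; rewrite big_pred0.
Qed.

Lemma rho_packing : exists2 D, packing e D & rho e = #|D|.
Proof.
have some_packing : #|packing e| > 0.
  by apply/card_gt0P; exists set0; apply/forallP=> u; rewrite inE.
have [D pkD rhoE] := eq_bigmax_cond (fun D => #|D|) some_packing.
by exists D.
Qed.

End TotalRomanDomination.

Lemma weight_pair (T1 T2 : finType) (f : rfun (T1 * T2)%type) :
  weight f = \sum_x \sum_y f (x, y).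
Proof. by rewrite pair_bigA; apply: eq_bigr => -[]. Qed.

Lemma no_isolated_direct_prod (T1 T2 : finType) (e1 : rel T1) (e2 : rel T2) :
  no_isolated e1 -> no_isolated e2 -> no_isolated (direct_prod e1 e2).
Proof.
move=> ni1 ni2 [x y]; have [u1 e1xu1] := ni1 x; have [u2 e2yu2] := ni2 y.
by exists (u1, u2); rewrite /direct_prod /= e1xu1 e2yu2.
Qed.

Section DirectProduct.

Variables (T1 T2 : finType) (e1 : rel T1) (e2 : rel T2).

Definition rfun_mul (g : rfun T1) (h : rfun T2) : rfun (T1 * T2)%type :=
  [ffun p => cap2 (g p.1 * h p.2)].

Lemma rfun_mulE g h x y : rfun_mul g h (x, y) = minn 2 (g x * h y) :> nat.
Proof. by rewrite ffunE cap2E. Qed.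

Lemma rfun_mul_TRDF g h :
  is_TRDF e1 g -> is_TRDF e2 h -> is_TRDF (direct_prod e1 e2) (rfun_mul g h).
Proof.
move=> /TRDFP[g0 gN] /TRDFP[h0 hN]; apply/TRDFP; split=> -[x y].
  rewrite rfun_mulE => min0; have /eqP : g x * h y = 0 by lia.
  rewrite muln_eq0; case/orP=> [/eqP/g0[u1 e1xu1 gu1] | /eqP/h0[u2 e2yu2 hu2]].
    have [u2 e2yu2 hu2] := hN y.
    by exists (u1, u2); rewrite /direct_prod ?e1xu1 ?e2yu2 // rfun_mulE gu1; lia.
  have [u1 e1xu1 gu1] := gN x.
  by exists (u1, u2); rewrite /direct_prod ?e1xu1 ?e2yu2 // rfun_mulE hu2; lia.
have [u1 e1xu1 gu1] := gN x; have [u2 e2yu2 hu2] := hN y.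
by exists (u1, u2); rewrite /direct_prod ?e1xu1 ?e2yu2 // rfun_mulE; lia.
Qed.

Lemma weight_rfun_mul g h :
  weight (rfun_mul g h) + 2 * #|level g 2| * #|level h 2| = weight g * weight h.
Proof.
rewrite weight_pair !card_level -mulnA /weight !big_distrlr big_distrr -big_split.
apply: eq_bigr => x _; rewrite big_distrr -big_split; apply: eq_bigr => y _.
by rewrite /= rfun_mulE mulnA cap2_mul_level2.
Qed.

Lemma gamma_tR_direct_prod_ub g h :
  is_TRDF e1 g -> is_TRDF e2 h ->
  gamma_tR (direct_prod e1 e2) + 2 * #|level g 2| * #|level h 2|
    <= weight g * weight h.
Proof.
move=> tg th; rewrite -weight_rfun_mul leq_add2r.
exact/gamma_tR_le_weight/rfun_mul_TRDF.
Qed.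

Definition nbhd_rfun (f : rfun (T1 * T2)%type) (d : T2) : rfun T1 :=
  [ffun x => cap2 (\sum_(y in cnbhd e2 d) f (x, y))].

Lemma nbhd_rfun_TRDF f d :
  is_TRDF (direct_prod e1 e2) f -> is_TRDF e1 (nbhd_rfun f d).
Proof.
move=> /TRDFP[f0 fN].
have le_nbhd x y : y \in cnbhd e2 d -> f (x, y) <= nbhd_rfun f d x.
  move=> yd; rewrite ffunE cap2E leq_min -ltnS ltn_ord.
  by rewrite (bigD1 y) //= leq_addr.
apply/TRDFP; split=> x.
  move=> fx0; have /f0[[u1 u2] /andP[/= e1xu1 e2du2] fu] : f (x, d) = 0 :> nat.
    have := le_nbhd x d (mem_cnbhd_refl e2 d).
    by rewrite fx0 leqn0 => /eqP.
  exists u1 => //; apply/eqP; rewrite eqn_leq -ltnS ltn_ord.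
  by have := le_nbhd u1 u2 (mem_cnbhd_adj e2du2); rewrite fu.
have [[u1 u2] /andP[/= e1xu1 e2du2] fu] := fN (x, d).
exists u1 => //; rewrite -lt0n (leq_trans _ (le_nbhd u1 u2 _)) ?lt0n //.
exact: mem_cnbhd_adj.
Qed.

Lemma packing_gamma_tR_le f D :
  is_TRDF (direct_prod e1 e2) f -> packing e2 D -> #|D| * gamma_tR e1 <= weight f.
Proof.
move=> tf pkD; rewrite -sum_nat_const.
apply: (@leq_trans (\sum_(d in D) \sum_x \sum_(y in cnbhd e2 d) f (x, y))).
  apply: leq_sum => d _.
  apply: leq_trans (gamma_tR_le_weight (nbhd_rfun_TRDF d tf)) _.
  by apply: leq_sum => x _; rewrite ffunE cap2E geq_minr.
rewrite weight_pair exchange_big /=; apply: leq_sum => x _.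
exact: packing_sum_cnbhd_le.
Qed.

Lemma rho_mul_gamma_tR_le :
  no_isolated e1 -> no_isolated e2 ->
  rho e2 * gamma_tR e1 <= gamma_tR (direct_prod e1 e2).
Proof.
move=> ni1 ni2; have [D pkD ->] := rho_packing e2.
apply: leq_gamma_tR (no_isolated_direct_prod ni1 ni2) _ => f tf.
exact: packing_gamma_tR_le.
Qed.

Definition rfun_swap (f : rfun (T1 * T2)%type) : rfun (T2 * T1)%type :=
  [ffun p => f (p.2, p.1)].

Lemma rfun_swapE f y x : rfun_swap f (y, x) = f (x, y).
Proof. by rewrite ffunE. Qed.

Lemma rfun_swap_TRDF f :
  is_TRDF (direct_prod e1 e2) f -> is_TRDF (direct_prod e2 e1) (rfun_swap f).
Proof.
have swap_adj x y u1 u2 :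
  direct_prod e1 e2 (x, y) (u1, u2) = direct_prod e2 e1 (y, x) (u2, u1).
  exact: andbC.
move=> /TRDFP[f0 fN]; apply/TRDFP; split=> -[y x].
  rewrite rfun_swapE => /f0[[u1 u2] exu fu].
  by exists (u2, u1); rewrite -?swap_adj ?rfun_swapE.
have [[u1 u2] exu fu] := fN (x, y).
by exists (u2, u1); rewrite -?swap_adj ?rfun_swapE.
Qed.

Lemma weight_rfun_swap f : weight (rfun_swap f) = weight f.
Proof.
rewrite !weight_pair exchange_big.
by apply: eq_bigr => x _; apply: eq_bigr => y _; rewrite rfun_swapE.
Qed.

Lemma gamma_tR_direct_prod_swap_le :
  no_isolated e1 -> no_isolated e2 ->
  gamma_tR (direct_prod e2 e1) <= gamma_tR (direct_prod e1 e2).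
Proof.
move=> ni1 ni2; apply: leq_gamma_tR (no_isolated_direct_prod ni1 ni2) _ => f tf.
by rewrite -weight_rfun_swap gamma_tR_le_weight ?rfun_swap_TRDF.
Qed.

End DirectProduct.

Unset Implicit Arguments.

Theorem theorem2p1 (T1 T2 : finType) (e1 : rel T1) (e2 : rel T2)
  (sG : simple_graph e1) (sH : simple_graph e2)
  (niG : no_isolated e1) (niH : no_isolated e2)
  (g : rfun T1) (h : rfun T2)
  (hg : is_gamma_tR_fun e1 g)
  (hgmax : forall g' : rfun T1, is_gamma_tR_fun e1 g' ->
             #|level g' 2| <= #|level g 2|)
  (hh : is_gamma_tR_fun e2 h)
  (hhmax : forall h' : rfun T2, is_gamma_tR_fun e2 h' ->
             #|level h' 2| <= #|level h 2|) :
  maxn (rho e2 * gamma_tR e1) (rho e1 * gamma_tR e2)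
    <= gamma_tR (direct_prod e1 e2)
  /\ gamma_tR (direct_prod e1 e2) + 2 * #|level g 2| * #|level h 2|
    <= gamma_tR e2 * gamma_tR e1.
Proof.
have [[tg wg] [th wh]] := (hg, hh); split.
  rewrite geq_max rho_mul_gamma_tR_le //.
  apply: leq_trans (rho_mul_gamma_tR_le niH niG) _.
  exact: gamma_tR_direct_prod_swap_le.
by rewrite -wg -wh [_ * weight g]mulnC gamma_tR_direct_prod_ub.
Qed.
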